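(* Let $n\geq 3$, $d\geq 2$ and $\ell\in\mathbb{R}_{>0}^n$. The map $\varphi_d:M_d(\ell)\to M_{d+1}(\ell)$ is $2$-to-$1$ on the set of $d$-dimensional polygons and $1$-to-$1$ elsewhere; that is, for $[P]\in M_d(\ell)$ the set $\varphi_d^{-1}(\varphi_d([P]))$ has exactly two elements if $\dim(P)=d$ and exactly one element if $\dim(P)<d$.
   Context: $V_d(\ell)=\{(\mathbf{v}_1,\ldots,\mathbf{v}_{n-1})\in(\mathbb{R}^d)^{n-1} : \|\mathbf{v}_i-\mathbf{v}_{i-1}\|=l_i,\ i=1,\ldots,n\}$ with $\mathbf{v}_0=\mathbf{v}_n=\mathbf{0}$; $M_d(\ell)=V_d(\ell)/SO(d)$ with $SO(d)$ acting diagonally, $[P]$ the class of $P$. $\dim(P)$ (and $\dim([P])$) is the dimension of the linear span of the vertices of $P$. For a fixed linear Euclidean isometry $f_d:\mathbb{R}^d\to\mathbb{R}^{d+1}$, $F_d(\mathbf{v}_1,\ldots,\mathbf{v}_{n-1})=(f_d(\mathbf{v}_1),\ldots,f_d(\mathbf{v}_{n-1}))$ and $\varphi_d([P])=[F_d(P)]$. *)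

From HB Require Import structures.
From mathcomp Require Import all_boot all_order all_algebra.
From mathcomp Require Import all_classical all_reals.
Set Implicit Arguments. Unset Strict Implicit. Unset Printing Implicit Defensive.
Import Order.TTheory GRing.Theory Num.Theory.
Local Open Scope ring_scope.
Local Open Scope classical_set_scope.

Section PolygonSpaces.
Variable R : realType.

Definition enorm (d : nat) (v : 'rV[R]_d) : R := Num.sqrt (\sum_(j < d) v 0 j ^+ 2).

(* A polygon P in (R^d)^(n-1): row k (k = 0..n-2) is the vertex v_(k+1).
   vtx P i is v_i, with v_0 = v_n = 0. *)
Definition vtx (n d : nat) (P : 'M[R]_(n.-1, d)) (i : nat) : 'rV[R]_d :=
  if i is k.+1 then (if @insub _ (fun m => m < n.-1)%N _ k is Some j then row j P else 0)
  else 0.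

(* l k (k : 'I_n) is the paper's l_(k+1): ||v_(k+1) - v_k|| = l_(k+1). *)
Definition Vpol (n d : nat) (l : 'I_n -> R) : set 'M[R]_(n.-1, d) :=
  [set P | forall k : 'I_n, enorm (vtx P k.+1 - vtx P k) = l k].

(* SO(d) acting on column vectors; on the row representation v^T |-> v^T g^T. *)
Definition SOd (d : nat) : set 'M[R]_d :=
  [set g | g *m g^T = 1%:M /\ \det g = 1].

Definition rot_equiv (n d : nat) (P Q : 'M[R]_(n.-1, d)) : Prop :=
  exists g, SOd g /\ Q = P *m g^T.

(* The class [P] in M_d(l) = V_d(l)/SO(d), as a subset of V_d(l). *)
Definition pclass (n d : nat) (l : 'I_n -> R) (P : 'M[R]_(n.-1, d)) :
  set 'M[R]_(n.-1, d) := [set Q | Vpol l Q /\ rot_equiv P Q].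

Definition Mpol (n d : nat) (l : 'I_n -> R) : set (set 'M[R]_(n.-1, d)) :=
  [set C | exists P, Vpol l P /\ C = pclass l P].

Definition lin_isometry (d : nat) (A : 'M[R]_(d, d.+1)) : Prop :=
  forall v : 'rV[R]_d, enorm (v *m A) = enorm v.

Definition Fmap (n d : nat) (A : 'M[R]_(d, d.+1)) (P : 'M[R]_(n.-1, d)) :
  'M[R]_(n.-1, d.+1) := P *m A.

(* phi_d on classes: phi_d(C) = [F_d(Q)] for Q in C (written choice-free as
   the union of the classes of the F_d(Q), Q in C; for C = [P] this is [F_d(P)]). *)
Definition phimap (n d : nat) (l : 'I_n -> R) (A : 'M[R]_(d, d.+1))
  (C : set 'M[R]_(n.-1, d)) : set 'M[R]_(n.-1, d.+1) :=
  [set Y | exists Q, C Q /\ Vpol l Y /\ rot_equiv (Fmap A Q) Y].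

Definition phifiber (n d : nat) (l : 'I_n -> R) (A : 'M[R]_(d, d.+1))
  (P : 'M[R]_(n.-1, d)) : set (set 'M[R]_(n.-1, d)) :=
  [set C | Mpol l C /\ phimap l A C = phimap l A (pclass l P)].

End PolygonSpaces.

From HB Require Import structures.
From mathcomp Require Import all_boot all_order all_algebra.
From mathcomp Require Import all_classical all_reals.
From mathcomp Require Import ring lra.
Import Order.TTheory GRing.Theory Num.Theory.
Local Open Scope ring_scope.
Local Open Scope classical_set_scope.
Set Implicit Arguments. Unset Strict Implicit. Unset Printing Implicit Defensive.

(** Two configurations X, Y of vectors with the same Gram matrix X X^T = Y Y^T
  differ by an orthogonal transformation (Householder reflections match them
  one vector at a time).  Since f_d is an isometry, F_d preserves Gram
  matrices, and F_d(P) spans at most d of the d+1 dimensions, so in R^(d+1)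
  equal Gram matrices even give equal classes.  Hence the fiber of phi_d
  through [P] consists of the classes [Q] with Q Q^T = P P^T, namely [P] and
  [P S] for the reflection S in a coordinate hyperplane.  If P has rank < d,
  some reflection fixes P and [P S] = [P]; if P spans R^d, a rotation g with
  P g = P S must equal S, which has determinant -1. *)

Section DotProduct.
Variables (R : realFieldType) (k : nat).
Implicit Types u v w : 'rV[R]_k.

Definition dotv u v : R := (u *m v^T) 0 0.

Lemma dotvE u v : dotv u v = \sum_j u 0 j * v 0 j.
Proof. by rewrite /dotv mxE; apply: eq_bigr => j _; rewrite mxE. Qed.

Lemma dotvC u v : dotv u v = dotv v u.
Proof. by rewrite !dotvE; apply: eq_bigr => j _; rewrite mulrC. Qed.

Lemma dotvDl u v w : dotv (u + v) w = dotv u w + dotv v w.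
Proof. by rewrite /dotv mulmxDl mxE. Qed.

Lemma dotvBl u v w : dotv (u - v) w = dotv u w - dotv v w.
Proof. by rewrite /dotv mulmxBl mxE [X in _ = X - _]mxE /= !mxE. Qed.

Lemma dotvZl a u v : dotv (a *: u) v = a * dotv u v.
Proof. by rewrite /dotv -scalemxAl mxE. Qed.

Lemma dotvDr u v w : dotv w (u + v) = dotv w u + dotv w v.
Proof. by rewrite dotvC dotvDl !(dotvC w). Qed.

Lemma dotvBr u v w : dotv w (u - v) = dotv w u - dotv w v.
Proof. by rewrite dotvC dotvBl !(dotvC w). Qed.

Lemma dotvZr a u v : dotv u (a *: v) = a * dotv u v.
Proof. by rewrite dotvC dotvZl dotvC. Qed.

Lemma dotv_ge0 u : 0 <= dotv u u.
Proof. by rewrite dotvE sumr_ge0 // => j _; rewrite -expr2 sqr_ge0. Qed.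

Lemma dotv_eq0 u : (dotv u u == 0) = (u == 0).
Proof.
apply/idP/eqP => [|->]; last by rewrite dotvE big1 // => j _; rewrite mxE mul0r.
rewrite dotvE psumr_eq0 => [/allP u0|j _]; last by rewrite -expr2 sqr_ge0.
apply/rowP => j; rewrite mxE; apply/eqP.
by rewrite -sqrf_eq0 expr2; exact: u0 (mem_index_enum j).
Qed.

End DotProduct.

Section OrthogonalMatrices.
Variable R : realFieldType.

Lemma mulmx_trE m n k (X : 'M[R]_(m, k)) (Y : 'M[R]_(n, k)) i j :
  (X *m Y^T) i j = dotv (row i X) (row j Y).
Proof. by rewrite dotvE mxE; apply: eq_bigr => l _; rewrite !mxE. Qed.

Definition gram m k (X : 'M[R]_(m, k)) : 'M[R]_m := X *m X^T.

Lemma gramE m k (X : 'M[R]_(m, k)) i j :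
  gram X i j = dotv (row i X) (row j X).
Proof. exact: mulmx_trE. Qed.

Definition orthogonalmx m n (M : 'M[R]_(m, n)) : Prop := M *m M^T = 1%:M.

Lemma orthogonalmx1 n : orthogonalmx (1%:M : 'M[R]_n).
Proof. by rewrite /orthogonalmx trmx1 mulmx1. Qed.

Lemma gram_mulmx_orthogonal m n p (X : 'M[R]_(m, n)) (M : 'M[R]_(n, p)) :
  orthogonalmx M -> gram (X *m M) = gram X.
Proof. by move=> oM; rewrite /gram trmx_mul mulmxA -(mulmxA X) oM mulmx1. Qed.

Lemma orthogonalmxM m n p (M : 'M[R]_(m, n)) (N : 'M[R]_(n, p)) :
  orthogonalmx M -> orthogonalmx N -> orthogonalmx (M *m N).
Proof. by move=> oM oN; rewrite /orthogonalmx -/(gram _) gram_mulmx_orthogonal. Qed.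

Lemma orthogonalmx_trmx_mul n (O : 'M[R]_n) : orthogonalmx O -> O^T *m O = 1%:M.
Proof. exact: mulmx1C. Qed.

Lemma orthogonalmx_tr n (O : 'M[R]_n) : orthogonalmx O -> orthogonalmx O^T.
Proof. by move=> oO; rewrite /orthogonalmx trmxK orthogonalmx_trmx_mul. Qed.

Lemma orthogonalmx_det_sqr n (O : 'M[R]_n) : orthogonalmx O -> \det O ^+ 2 = 1.
Proof. by move=> oO; rewrite expr2 -{2}det_tr -det_mulmx oO det1. Qed.

Lemma orthogonalmx_det n (O : 'M[R]_n) :
  orthogonalmx O -> \det O = 1 \/ \det O = -1.
Proof.
by move=> /orthogonalmx_det_sqr /eqP; rewrite sqrf_eq1 => /orP[] /eqP; [left|right].
Qed.

End OrthogonalMatrices.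

Section Householder.
Variables (R : realFieldType) (k : nat).
Implicit Types u w x y z : 'rV[R]_k.

Definition householder w : 'M[R]_k := 1%:M - (2 / dotv w w) *: (w^T *m w).

Lemma mulmx_householder u w :
  u *m householder w = u - (2 / dotv w w * dotv u w) *: w.
Proof.
rewrite mulmxBr mulmx1 -scalemxAr mulmxA [u *m w^T]mx11_scalar mul_scalar_mx.
by rewrite scalerA.
Qed.

Lemma householder_orthogonal w : w != 0 -> orthogonalmx (householder w).
Proof.
rewrite -dotv_eq0 => ww0; rewrite /orthogonalmx.
have -> : (householder w)^T = householder w.
  by rewrite /householder linearB /= trmx1 linearZ /= trmx_mul trmxK.
apply/row_matrixP => i; rewrite !rowE mulmx1 mulmxA !mulmx_householder.
rewrite dotvBl dotvZl -addrA -opprD -scalerDl.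
set c := dotv w w; set a := dotv _ w.
have -> : 2 / c * a + 2 / c * (a - 2 / c * a * c) = 0 by field.
by rewrite scale0r subr0.
Qed.

Lemma householder_swap x y : dotv x x = dotv y y ->
  exists H, [/\ orthogonalmx H, x *m H = y &
    forall z, dotv z x = dotv z y -> z *m H = z].
Proof.
move=> xxyy; have [<-|xNy] := eqVneq x y.
  by exists 1%:M; split=> [||z _]; rewrite ?mulmx1 //; exact: orthogonalmx1.
have wN0 : x - y != 0 by rewrite subr_eq0.
exists (householder (x - y)); split=> [||z zxy]; first exact: householder_orthogonal.
  have ww : dotv (x - y) (x - y) = 2 * dotv x (x - y).
    by rewrite !dotvBl !dotvBr xxyy (dotvC y x); ring.
  have xw0 : dotv x (x - y) != 0.
    by apply: contraNneq wN0 => xw0; rewrite -dotv_eq0 ww xw0 mulr0.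
  rewrite mulmx_householder (_ : 2 / _ * _ = 1) ?ww; last by field.
  by rewrite scale1r opprB addrC subrK.
by rewrite mulmx_householder (dotvBr x y z) zxy subrr mulr0 scale0r subr0.
Qed.

End Householder.

Section GramMatrices.
Variable R : realFieldType.

Lemma gram_orthogonal m k (X Y : 'M[R]_(m, k)) :
  gram X = gram Y -> exists O, orthogonalmx O /\ Y = X *m O.
Proof.
move=> XY.
suff /(_ m (leqnn m)) [O [oO eqO]] : forall j, (j <= m)%N -> exists O,
    orthogonalmx O /\ forall i : 'I_m, (i < j)%N -> row i (X *m O) = row i Y.
  by exists O; split => //; apply/row_matrixP => i; rewrite eqO.
elim=> [_|j IHj jm].
  by exists 1%:M; split=> [|[]//]; exact: orthogonalmx1.
have [O [oO eqO]] := IHj (ltnW jm).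
have XOY : gram (X *m O) = gram Y by rewrite gram_mulmx_orthogonal.
pose i0 := Ordinal jm.
have [|H [oH xH zH]] := @householder_swap _ _ (row i0 (X *m O)) (row i0 Y).
  by rewrite -!gramE XOY.
exists (O *m H); split=> [|i]; first exact: orthogonalmxM.
rewrite mulmxA row_mul ltnS leq_eqVlt => /orP[/eqP ij|ij].
  by rewrite (_ : i = i0) ?xH //; exact: val_inj.
by rewrite eqO // zH // -{1}(eqO i ij) -!gramE XOY.
Qed.

End GramMatrices.

Section Reflections.
Variable R : rcfType.

Definition refl0 k : 'M[R]_k.+1 := diag_mx (\row_j (if j == ord0 then -1 else 1)).

Lemma refl0_orthogonal k : orthogonalmx (refl0 k).
Proof.
rewrite /orthogonalmx /refl0 tr_diag_mx mul_mx_diag; apply/matrixP => i j.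
rewrite !mxE; have [->|_] := eqVneq i j; last by rewrite mulr0n mul0r.
by rewrite mulr1n; case: ifP; rewrite ?mulrNN mulr1.
Qed.

Lemma det_refl0 k : \det (refl0 k) = -1.
Proof.
rewrite det_diag big_ord_recl !mxE eqxx big1 ?mulr1 // => i _.
by rewrite mxE.
Qed.

Lemma mulmx_refl0_id m k (Z : 'M[R]_(m, k.+1)) :
  (forall i, Z i ord0 = 0) -> Z *m refl0 k = Z.
Proof.
move=> Z0; rewrite mul_mx_diag; apply/matrixP => i j; rewrite !mxE.
by have [->|_] := eqVneq j ord0; rewrite ?Z0 ?mul0r ?mulr1.
Qed.

(** Conjugate of [refl0] by an orthogonal map sending the first basis vector
  to a normal vector of the span of the rows of [X]. *)
Lemma fixing_reflection m k (X : 'M[R]_(m, k.+1)) : (\rank X < k.+1)%N ->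
  exists S, [/\ orthogonalmx S, \det S = -1 & X *m S = X].
Proof.
move=> rkX; have /rowV0Pn[u /sub_kermxP uX uN0] : kermx X^T != 0.
  by rewrite -mxrank_eq0 mxrank_ker mxrank_tr subn_eq0 -ltnNge.
have uu_gt0 : 0 < dotv u u by rewrite lt_def dotv_eq0 uN0 dotv_ge0.
pose c := Num.sqrt (dotv u u); pose e : 'rV[R]_k.+1 := c *: delta_mx 0 ord0.
have [|H [oH eH _]] := @householder_swap _ _ e u.
  rewrite /e dotvZl dotvZr dotvE big_ord_recl big1 => [|j _]; last first.
    by rewrite !mxE mulr0.
  by rewrite !mxE eqxx mulr1 addr0 mulrA -expr2 sqr_sqrtr ?mulr1 ?ltW.
exists (H^T *m refl0 k *m H); split.
- exact: orthogonalmxM (orthogonalmxM (orthogonalmx_tr oH) (refl0_orthogonal k)) oH.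
- rewrite !det_mulmx det_tr det_refl0 mulrC mulrA -expr2.
  by rewrite orthogonalmx_det_sqr // mul1r.
rewrite !mulmxA mulmx_refl0_id => [|i].
  by rewrite -mulmxA orthogonalmx_trmx_mul // mulmx1.
have /eqP : c * (X *m H^T) i ord0 = 0.
  rewrite mulmx_trE -dotvZr (rowE ord0 H) scalemxAl -/e eH.
  by rewrite -(row_id ord0 u) -mulmx_trE -[X]trmxK -trmx_mul uX !mxE.
by rewrite mulf_eq0 sqrtr_eq0 leNgt uu_gt0 => /eqP.
Qed.

Lemma gram_rotation m k (X Y : 'M[R]_(m, k)) : (\rank X < k)%N ->
  gram X = gram Y -> exists O, [/\ orthogonalmx O, \det O = 1 & Y = X *m O].
Proof.
case: k X Y => [//|k] X Y rkX /gram_orthogonal[O [oO ->]].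
have [detO|detO] := orthogonalmx_det oO; first by exists O.
have [S [oS detS XS]] := fixing_reflection rkX.
exists (S *m O); split; first exact: orthogonalmxM.
  by rewrite det_mulmx detS detO mulrNN mulr1.
by rewrite mulmxA XS.
Qed.

End Reflections.
Arguments refl0 {R} k.

Section PolygonSpaces.
Variable R : realType.

Lemma enorm_dotv d (v : 'rV[R]_d) : enorm v = Num.sqrt (dotv v v).
Proof.
by rewrite /enorm dotvE; congr Num.sqrt; apply: eq_bigr => j _; rewrite expr2.
Qed.

Lemma enorm_mulmx_orthogonal d d' (M : 'M[R]_(d, d')) (v : 'rV[R]_d) :
  orthogonalmx M -> enorm (v *m M) = enorm v.
Proof. by move=> oM; rewrite !enorm_dotv /dotv -/(gram _) gram_mulmx_orthogonal. Qed.

Lemma lin_isometry_orthogonal d (A : 'M[R]_(d, d.+1)) :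
  lin_isometry A -> orthogonalmx A.
Proof.
move=> isoA; have dotvA v : dotv (v *m A) (v *m A) = dotv v v.
  by apply/eqP; rewrite -eqr_sqrt ?dotv_ge0 // -!enorm_dotv isoA.
have polarA u v : dotv (u *m A) (v *m A) = dotv u v.
  have := dotvA (u + v); rewrite mulmxDl !dotvDl !dotvDr !dotvA.
  by rewrite (dotvC (v *m A)) (dotvC v) => ?; lra.
apply/matrixP => i j; rewrite mulmx_trE !rowE polarA.
have -> : 1%:M = 1%:M *m (1%:M : 'M[R]_d)^T by rewrite trmx1 mulmx1.
by rewrite mulmx_trE !rowE !mulmx1.
Qed.

Lemma vtx_mulmx n d d' (P : 'M[R]_(n.-1, d)) (M : 'M[R]_(d, d')) i :
  vtx (P *m M) i = vtx P i *m M.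
Proof.
case: i => [|i]; first by rewrite mul0mx.
by rewrite /vtx; case: insub => [j|]; rewrite ?row_mul ?mul0mx.
Qed.

Lemma Vpol_mulmx n d d' (l : 'I_n -> R) (P : 'M[R]_(n.-1, d)) (M : 'M[R]_(d, d')) :
  orthogonalmx M -> Vpol l P -> Vpol l (P *m M).
Proof.
by move=> oM lP k; rewrite !vtx_mulmx -mulmxBl enorm_mulmx_orthogonal //; exact: lP.
Qed.

Section RotationClasses.
Variables (n d : nat) (l : 'I_n -> R).
Implicit Types P Q S : 'M[R]_(n.-1, d).

Lemma rot_equivP P Q :
  rot_equiv P Q <-> exists O, [/\ orthogonalmx O, \det O = 1 & Q = P *m O].
Proof.
split=> [[g [[gg detg] ->]]|[O [oO detO ->]]].
  by exists g^T; rewrite det_tr; split=> //; exact: orthogonalmx_tr.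
exists O^T; rewrite trmxK; split=> //; split; last by rewrite det_tr.
exact: orthogonalmx_tr.
Qed.

Lemma rot_equiv_refl P : rot_equiv P P.
Proof.
by apply/rot_equivP; exists 1%:M; rewrite det1 mulmx1; split=> //; exact: orthogonalmx1.
Qed.

Lemma rot_equiv_sym P Q : rot_equiv P Q -> rot_equiv Q P.
Proof.
move=> /rot_equivP[O [oO detO ->]]; apply/rot_equivP; exists O^T.
by rewrite det_tr -mulmxA oO mulmx1; split=> //; exact: orthogonalmx_tr.
Qed.

Lemma rot_equiv_trans P Q S : rot_equiv P Q -> rot_equiv Q S -> rot_equiv P S.
Proof.
move=> /rot_equivP[O [oO detO ->]] /rot_equivP[O' [oO' detO' ->]].
apply/rot_equivP; exists (O *m O'); rewrite det_mulmx detO detO' mulr1 mulmxA.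
by split=> //; exact: orthogonalmxM.
Qed.

Lemma pclass_eq P Q : rot_equiv P Q -> pclass l P = pclass l Q.
Proof.
move=> PQ; apply/seteqP; split=> S [lS rS]; split=> //.
  exact: rot_equiv_trans (rot_equiv_sym PQ) rS.
exact: rot_equiv_trans PQ rS.
Qed.

Lemma pclass_self P : Vpol l P -> pclass l P P.
Proof. by split=> //; exact: rot_equiv_refl. Qed.

End RotationClasses.

Section Fibers.
Variables (n d : nat) (l : 'I_n -> R) (A : 'M[R]_(d, d.+1)).
Hypothesis isoA : lin_isometry A.
Let oA := lin_isometry_orthogonal isoA.

(** In [R^(d+1)] the image of a [d]-dimensional configuration is rank
  deficient, so [gram_rotation] applies. *)
Lemma phimap_pclassP (Q : 'M[R]_(n.-1, d)) Y : Vpol l Q ->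
  phimap l A (pclass l Q) Y <-> Vpol l Y /\ gram Y = gram Q.
Proof.
move=> lQ; split=> [[_ [[_ /rot_equivP[O [oO _ ->]]]]]|].
  move=> [lY /rot_equivP[O' [oO' _ eqY]]].
  split=> //; rewrite eqY (gram_mulmx_orthogonal _ oO') /Fmap.
  by rewrite (gram_mulmx_orthogonal _ oA) (gram_mulmx_orthogonal _ oO).
move=> [lY YQ]; exists Q; split; first exact: pclass_self.
split=> //; apply/rot_equivP; apply: gram_rotation; last first.
  by rewrite /Fmap (gram_mulmx_orthogonal _ oA).
by rewrite ltnS (leq_trans (mxrankM_maxr _ _)) // rank_leq_row.
Qed.

Lemma phifiberP (P : 'M[R]_(n.-1, d)) C : Vpol l P ->
  phifiber l A P C <-> exists Q, [/\ Vpol l Q, C = pclass l Q & gram Q = gram P].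
Proof.
move=> lP; split=> [[[Q [lQ ->]] QP]|[Q [lQ -> QP]]].
  exists Q; split=> //.
  have : phimap l A (pclass l Q) (Q *m A).
    apply/(phimap_pclassP _ lQ); split; first exact: Vpol_mulmx.
    exact: gram_mulmx_orthogonal.
  by rewrite QP => /(phimap_pclassP _ lP)[_]; rewrite (gram_mulmx_orthogonal _ oA).
split; first by exists Q.
apply/seteqP; split=> Y.
  by move/(phimap_pclassP _ lQ) => [lY YQ]; apply/(phimap_pclassP _ lP); rewrite -QP.
by move/(phimap_pclassP _ lP) => [lY YP]; apply/(phimap_pclassP _ lQ); rewrite QP.
Qed.

End Fibers.

Section ReflectedClass.
Variables (n d : nat) (l : 'I_n -> R) (P : 'M[R]_(n.-1, d.+1)).
Hypothesis lP : Vpol l P.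
Let oS := refl0_orthogonal R d.

Lemma phifiberE (A : 'M[R]_(d.+1, d.+2)) : lin_isometry A ->
  phifiber l A P = [set pclass l P] `|` [set pclass l (P *m refl0 d)].
Proof.
move=> isoA; apply/seteqP; split=> C.
  move/(phifiberP isoA _ lP) => [Q [lQ -> /esym/gram_orthogonal[O [oO ->]]]].
  have [detO|detO] := orthogonalmx_det oO; [left|right].
    by apply/esym/pclass_eq/rot_equivP; exists O.
  apply/esym/pclass_eq/rot_equivP; exists ((refl0 d)^T *m O); split.
  - exact: orthogonalmxM (orthogonalmx_tr oS) oO.
  - by rewrite det_mulmx det_tr det_refl0 detO mulrNN mulr1.
  - by rewrite mulmxA -(mulmxA P) oS mulmx1.
move=> [|] ->; apply/(phifiberP isoA _ lP); first by exists P.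
exists (P *m refl0 d); split=> //; first exact: Vpol_mulmx.
exact: gram_mulmx_orthogonal.
Qed.

(** A rotation taking [P] to [P *m refl0 d] agrees with [refl0 d] on the
  row space of [P], which is everything. *)
Lemma pclass_refl0_neq : row_full P -> pclass l P <> pclass l (P *m refl0 d).
Proof.
move=> /row_fullP[B BP] eqPS.
have [_ /rot_equivP[O [_ detO PO]]] : pclass l P (P *m refl0 d).
  by rewrite eqPS; apply/pclass_self/Vpol_mulmx.
have SO : refl0 d = O by rewrite -[refl0 d]mul1mx -BP -mulmxA PO mulmxA BP mul1mx.
by move: detO; rewrite -SO det_refl0; lra.
Qed.

Lemma pclass_refl0_eq : (\rank P < d.+1)%N -> pclass l P = pclass l (P *m refl0 d).
Proof.
move=> /fixing_reflection[S [oT detS PS]]; apply/pclass_eq/rot_equivP.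
exists (S *m refl0 d); split; first exact: orthogonalmxM.
  by rewrite det_mulmx detS det_refl0 mulrNN mulr1.
by rewrite mulmxA PS.
Qed.

End ReflectedClass.
End PolygonSpaces.

Theorem proposition5p2 (R : realType) (n d : nat) (l : 'I_n -> R)
  (A : 'M[R]_(d, d.+1)) (P : 'M[R]_(n.-1, d)) :
  (3 <= n)%N -> (2 <= d)%N -> (forall k, 0 < l k) -> lin_isometry A ->
  Vpol l P ->
  ((\rank P = d) ->
     exists C1 C2, C1 <> C2 /\ phifiber l A P = [set C1] `|` [set C2]) /\
  ((\rank P < d)%N -> exists C, phifiber l A P = [set C]).
Proof.
case: d A P => [//|d] A P _ _ _ isoA lP; split=> [rkP|rkP].
  exists (pclass l P), (pclass l (P *m refl0 d)); split.
    by apply: pclass_refl0_neq; rewrite // /row_full rkP.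
  exact: phifiberE.
by exists (pclass l P); rewrite phifiberE // -pclass_refl0_eq // setUid.
Qed.
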